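(* Let $\mathcal M$ be a matroid on a finite ground set $V$ with $|V|=n$ and $\zeta(\mathcal M)=\zeta$, and let $g$ be a positive integer with $g\le\frac{n}{\zeta}$. Then $\zeta(\mathcal M^g)=\frac{n}{g}$, where $\mathcal M^g=\{A\in\mathcal M: |A|\le g\}$.
   Context: A simplicial complex $\mathcal C$ on ground set $V(\mathcal C)$ is a family of subsets closed under taking subsets. A matroid is a complex in which, for every subset $W$ of the ground set, all maximal members contained in $W$ have the same size. For a complex $\mathcal C$, $\mathrm{rank}(\mathcal C)$ is the maximal size of a member, $\mathcal C[S]$ is the set of members of $\mathcal C$ contained in $S$, and $\zeta(\mathcal C)=\max_{S\subseteq V(\mathcal C)}\frac{|S|}{\mathrm{rank}(\mathcal C[S])}$ (over nonempty $S$). The complex $\mathcal M^g$ is regarded as a complex on the same ground set $V$. *)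

From mathcomp Require Import all_boot all_order all_algebra.
Set Implicit Arguments. Unset Strict Implicit. Unset Printing Implicit Defensive.
Import Order.TTheory GRing.Theory Num.Theory.

Definition is_complex (V : finType) (C : {set {set V}}) : Prop :=
  forall A B : {set V}, A \in C -> B \subset A -> B \in C.

Definition maximal_in (V : finType) (C : {set {set V}}) (W A : {set V}) : Prop :=
  [/\ A \in C, A \subset W &
      forall B : {set V}, B \in C -> B \subset W -> A \subset B -> B = A].

Definition is_matroid (V : finType) (M : {set {set V}}) : Prop :=
  is_complex M /\
  forall W A B : {set V}, maximal_in M W A -> maximal_in M W B -> #|A| = #|B|.

Definition restrict (V : finType) (C : {set {set V}}) (S : {set V}) : {set {set V}} :=
  [set A in C | A \subset S].

(* rank : maximal size of a member (0 for the empty family) *)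
Definition rank (V : finType) (C : {set {set V}}) : nat :=
  \max_(A in C) #|A|.

(* zeta C = max over nonempty S of |S| / rank(C[S]).  The value is in
   option rat, with None standing for +infinity (some nonempty S has
   rank(C[S]) = 0). *)
Definition zeta (V : finType) (C : {set {set V}}) : option rat :=
  if [exists S : {set V}, (S != set0) && (rank (restrict C S) == 0%N)]
  then None
  else Some (\big[Num.max/0%R]_(S : {set V} | S != set0)
               ((#|S|%:R : rat) / (rank (restrict C S))%:R)%R).

Definition truncation (V : finType) (M : {set {set V}}) (g : nat) : {set {set V}} :=
  [set A in M | #|A| <= g].

From mathcomp Require Import all_boot all_order all_algebra.

Set Implicit Arguments.
Unset Strict Implicit.
Unset Printing Implicit Defensive.

Import Order.TTheory GRing.Theory Num.Theory.

(* In a complex, every member of [M[S]] can be shrunk to size [g], so the rank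
   of [M^g[S]] is [min(g, rank M[S])].  Hence every ratio [|S| / rank M^g[S]]
   is at most [max(|S|/g, zeta M) <= n/g], using [zeta M <= n/g]; and the
   ratio of the whole ground set is at least [n/g], so the maximum is [n/g]. *)

Lemma exists_subset_card (T : finType) (A : {set T}) (k : nat) :
  (k <= #|A|)%N -> exists2 B : {set T}, B \subset A & #|B| = k.
Proof.
move=> /card_geqP [s [s_uniq s_size sA]].
exists [set x in s]; first by apply/subsetP => x; rewrite inE => /sA.
by rewrite cardsE (card_uniqP s_uniq).
Qed.

Section Zeta.

Variables (T : finType) (C : {set {set T}}).

Definition zeta_ratio (S : {set T}) : rat :=
  (#|S|%:R / (rank (restrict C S))%:R)%R.

Lemma zeta_ratio_ge0 S : (0 <= zeta_ratio S)%R.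
Proof. by rewrite divr_ge0 ?ler0n. Qed.

Lemma zeta_rank_gt0 z S :
  zeta C = Some z -> S != set0 -> (0 < rank (restrict C S))%N.
Proof.
rewrite /zeta; case: ifP => // /negbT/negP noS _ S_neq0; rewrite lt0n.
by apply/eqP => rank0; apply: noS; apply/existsP; exists S; rewrite S_neq0 rank0.
Qed.

Lemma zeta_ratio_le z S : zeta C = Some z -> S != set0 -> (zeta_ratio S <= z)%R.
Proof.
rewrite /zeta; case: ifP => // _ [<-] S_neq0.
exact: (le_bigmax_cond (P := fun S : {set T} => S != set0) _ zeta_ratio S_neq0).
Qed.

Lemma zeta_eq_Some z S0 :
  S0 != set0 -> (z <= zeta_ratio S0)%R ->
  (forall S, S != set0 -> (0 < rank (restrict C S))%N /\ (zeta_ratio S <= z)%R) ->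
  zeta C = Some z.
Proof.
move=> S0_neq0 z_le bounds; rewrite /zeta ifF; last first.
  apply/existsP => -[S /andP [S_neq0 /eqP rank0]].
  by have [] := bounds S S_neq0; rewrite rank0.
congr Some; apply/eqP; rewrite eq_le; apply/andP; split.
  apply: bigmax_le => [|S /bounds [] //].
  exact: le_trans (zeta_ratio_ge0 S0) (bounds S0 S0_neq0).2.
apply: le_trans z_le _.
exact: (le_bigmax_cond (P := fun S : {set T} => S != set0) _ zeta_ratio S0_neq0).
Qed.

End Zeta.

Lemma rank_restrict_truncation (T : finType) (M : {set {set T}}) g S :
  is_complex M ->
  rank (restrict (truncation M g) S) = minn g (rank (restrict M S)).
Proof.
move=> M_complex; apply/eqP; rewrite eqn_leq; apply/andP; split.
  apply/bigmax_leqP => A; rewrite !inE => /andP [/andP [AM Ag] AS].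
  rewrite leq_min Ag /=.
  by apply: (leq_bigmax_cond (F := fun A : {set T} => #|A|)); rewrite !inE AM AS.
have [->|rank_gt0] := posnP (rank (restrict M S)); first by rewrite minn0.
have MS_neq0 : (0 < #|restrict M S|)%N.
  apply/card_gt0P; have [MS0|[A A_in]] := set_0Vmem (restrict M S); last by exists A.
  by move: rank_gt0; rewrite /rank MS0 big_set0.
have [A0 A0_in rankE] := eq_bigmax_cond (fun A : {set T} => #|A|) MS_neq0.
move: A0_in; rewrite inE => /andP [A0M A0S].
have [B BA0 cardB] := exists_subset_card (geq_minr g #|A0|).
rewrite /rank rankE -cardB.
apply: (leq_bigmax_cond (F := fun A : {set T} => #|A|)).
by rewrite !inE (M_complex _ _ A0M BA0) cardB geq_minl (subset_trans BA0 A0S).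
Qed.

Theorem lemma4p1 (V : finType) (M : {set {set V}}) (z : rat) (g : nat) :
  is_matroid M ->
  zeta M = Some z ->
  (0 < g)%N ->
  (g%:R <= (#|V|%:R : rat) / z)%R ->
  zeta (truncation M g) = Some ((#|V|%:R : rat) / g%:R)%R.
Proof.
move=> [M_complex _] zetaM g_gt0 g_le.
have rankM_gt0 S : S != set0 -> (0 < rank (restrict M S))%N := zeta_rank_gt0 zetaM.
have min_rank_gt0 S : S != set0 -> (0 < minn g (rank (restrict M S)))%N.
  by move=> S_neq0; rewrite leq_min g_gt0 rankM_gt0.
have n_gt0 : (0 < #|V|)%N.
  by rewrite lt0n; apply: contraTneq g_le => ->; rewrite mul0r -ltNge ltr0n.
have V_neq0 : [set: V] != set0 by rewrite -card_gt0 cardsT.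
have z_gt0 : (0 < z)%R.
  apply: lt_le_trans (zeta_ratio_le zetaM V_neq0).
  by rewrite divr_gt0 // ltr0n ?cardsT ?rankM_gt0.
have z_le : (z <= #|V|%:R / g%:R)%R.
  by rewrite ler_pdivlMr ?ltr0n // mulrC -ler_pdivlMr.
apply: (zeta_eq_Some V_neq0) => [|S S_neq0];
  rewrite /zeta_ratio rank_restrict_truncation //.
  rewrite cardsT ler_pM2l ?ltr0n // lef_pV2 ?posrE ?ltr0n ?min_rank_gt0 //.
  by rewrite ler_nat geq_minl.
split; first exact: min_rank_gt0.
have [g_le_rank|rank_lt_g] := leqP g (rank (restrict M S)).
  rewrite ler_pM2r ?invr_gt0 ?ltr0n // ler_nat.
  by rewrite -cardsT subset_leq_card ?subsetT.
exact: le_trans (zeta_ratio_le zetaM S_neq0) z_le.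
Qed.
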